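(* Let $D\in\mathcal{R}$. Then $\widetilde L^-(D)=\widetilde N^-(D)$.
   Context: Let $n\ge 1$ and $\Phi^+=\{(i,j)\in\mathbb{Z}^2:1\le j<i\le n\}$, with rows $\mathcal{R}_k=\{(k,s)\in\Phi^+\}$ and columns $\mathcal{C}_k=\{(r,k)\in\Phi^+\}$. A rook placement is a subset $D\subseteq\Phi^+$ with $|D\cap\mathcal{R}_k|\le1$ and $|D\cap\mathcal{C}_k|\le1$ for all $k$; $\mathcal{R}$ is the set of rook placements. For $D\in\mathcal{R}$, $R_D$ is the $n\times n$ integer matrix with $(R_D)_{i,j}=\#\{(a,b)\in D:a\ge i,\ b\le j\}$ for $i>j$ and $0$ otherwise; $D\le D'$ means $R_D\le R_{D'}$ entrywise. Order on $\Phi^+$: $(a,b)\le(c,d)$ iff $a\le c$ and $b\ge d$; $\widetilde M(D)$ is the set of minimal elements of $D$ for this order. Define $\widetilde N^-(D)=\{D\setminus\{(i,j)\}:(i,j)\in\widetilde M(D)\}$ and $\widetilde L^-(D)=\{T\in\mathcal{R}: T<D,\ |T|<|D|$, and every $S\in\mathcal{R}$ with $T\le S<D$ and $|S|<|D|$ equals $T\}$. *)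

(* Positions (i,j) of Phi^+ are encoded 0-based as elements
   of 'I_n * 'I_n: the paper's (i,j), 1 <= j < i <= n, is (i-1, j-1). *)
From mathcomp Require Import all_boot.
Set Implicit Arguments. Unset Strict Implicit. Unset Printing Implicit Defensive.

Definition pos n := ('I_n * 'I_n)%type.

Definition phiplus n : {set pos n} := [set p : pos n | p.2 < p.1].

Definition row_k n (k : 'I_n) : {set pos n} := [set p in phiplus n | p.1 == k].
Definition col_k n (k : 'I_n) : {set pos n} := [set p in phiplus n | p.2 == k].

Definition rook n (D : {set pos n}) : bool :=
  [&& D \subset phiplus n,
      [forall k : 'I_n, #|D :&: row_k k| <= 1] &
      [forall k : 'I_n, #|D :&: col_k k| <= 1]].

Definition rankmx n (D : {set pos n}) (i j : 'I_n) : nat :=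
  if j < i then #|[set p in D | (i <= p.1) && (p.2 <= j)]| else 0.

Definition rle n (D D' : {set pos n}) : bool :=
  [forall i : 'I_n, forall j : 'I_n, rankmx D i j <= rankmx D' i j].
Definition rlt n (D D' : {set pos n}) : bool := rle D D' && (D != D').

Definition pos_le n (p q : pos n) : bool := (p.1 <= q.1) && (q.2 <= p.2).

Definition Mtilde n (D : {set pos n}) : {set pos n} :=
  [set p in D | [forall q in D, pos_le q p ==> (q == p)]].

Definition Ntilde_minus n (D : {set pos n}) : {set {set pos n}} :=
  [set D :\ p | p in Mtilde D].

Definition Ltilde_minus n (D : {set pos n}) : {set {set pos n}} :=
  [set T : {set pos n} | [&& rook T, rlt T D, #|T| < #|D| &
     [forall S : {set pos n},
        [&& rook S, rle T S, rlt S D & #|S| < #|D|] ==> (S == T)]]].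

From mathcomp Require Import all_boot zify.
Set Implicit Arguments. Unset Strict Implicit. Unset Printing Implicit Defensive.

(* Entries of a rank matrix count the rooks of a placement in a south-west
   "region" {p | i <= p.1, p.2 < j}, so R_X <= R_Y is a family of inequalities
   between region counts (rleP).  Two facts about regions drive the proof:
   - inclusion-exclusion at a single cell q (card_region_cell): the region
     counts around q determine whether q is a rook;
   - the staircase inequality: if T <= D and T, D have equal counts on a
     family of regions, then T has at least as many rooks as D in their union.
   ⊆: if T < D with |T| < |D|, the staircase inequality applied to the regions
   where T and D agree leaves a rook of D outside all of them, hence a minimal
   rook p of D with T strictly below D on every region containing p; thus
   T <= D \ {p}, and maximality of T gives T = D \ {p}.
   ⊇: if D \ {p} <= S < D with p minimal, S agrees with D on every region
   avoiding p, so every other rook of D is a rook of S by inclusion-exclusion,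
   and |S| < |D| forces S = D \ {p}. *)

Section Regions.

Variable n : nat.
Implicit Types (X Y D S T : {set pos n}) (p q : pos n).

Definition region (i j : nat) : {set pos n} :=
  [set p : pos n | (i <= p.1) && (p.2 < j)].

Lemma region_mono (i j i' j' : nat) :
  i <= i' -> j' <= j -> region i' j' \subset region i j.
Proof.
move=> hi hj; apply/subsetP => p; rewrite !inE => /andP[h1 h2].
by rewrite (leq_trans hi h1) (leq_trans h2 hj).
Qed.

Lemma region_up_closed (i j : nat) p q :
  pos_le p q -> p \in region i j -> q \in region i j.
Proof.
case/andP=> h1 h2; rewrite !inE => /andP[h3 h4].
by rewrite (leq_trans h3 h1) (leq_ltn_trans h2 h4).
Qed.

Lemma region_degenerate (i j : nat) : j = 0 \/ n <= i -> region i j = set0.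
Proof.
move=> h; apply/setP => p; rewrite !inE; apply/negbTE/negP => /andP[h1 h2].
case: h => [hj | hi]; first by rewrite hj in h2.
by have := leq_trans hi h1; rewrite leqNgt ltn_ord.
Qed.

Lemma rankmx_region X (i j : 'I_n) :
  j < i -> rankmx X i j = #|X :&: region i j.+1|.
Proof. by move=> h; rewrite /rankmx h; apply: eq_card => p; rewrite !inE ltnS. Qed.

Lemma rleP X Y :
  rle X Y <-> (forall i j, j <= i -> #|X :&: region i j| <= #|Y :&: region i j|).
Proof.
split=> [/forallP H i j hji | H].
- case: (ltnP i n) => hi; last by rewrite region_degenerate ?setI0 ?cards0 //; right.
  case: j hji => [|j] hji; first by rewrite region_degenerate ?setI0 ?cards0 //; left.
  have := forallP (H (Ordinal hi)) (Ordinal (ltn_trans hji hi)).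
  by rewrite !rankmx_region.
- apply/forallP => i; apply/forallP => j.
  case: (ltnP j i) => h; first by rewrite !rankmx_region //; apply: H.
  by rewrite /rankmx ltnNge h.
Qed.

Lemma rle_subset X Y : X \subset Y -> rle X Y.
Proof. by move=> hXY; apply/rleP => i j _; apply/subset_leq_card/setSI. Qed.

Lemma card_setD1I X (Q : {set pos n}) p :
  #|X :&: Q| = (p \in X :&: Q) + #|(X :\ p) :&: Q|.
Proof. by rewrite setIDAC -cardsD1. Qed.

Lemma rook_subset D X : rook D -> X \subset D -> rook X.
Proof.
case/and3P => hphi /forallP hrow /forallP hcol hXD; apply/and3P; split.
- exact: subset_trans hXD hphi.
- by apply/forallP => k; apply: leq_trans (hrow k); apply/subset_leq_card/setSI.
- by apply/forallP => k; apply: leq_trans (hcol k); apply/subset_leq_card/setSI.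
Qed.

(* Inclusion-exclusion at the cell q: the regions with corners (q.1, q.2 + 1)
   and (q.1 + 1, q.2) together cover the cell q, their intersection
   (q.1 + 1, q.2 + 1) and their union minus q, the region (q.1, q.2). *)
Lemma card_region_cell X q :
  #|X :&: region q.1 q.2.+1| + #|X :&: region q.1.+1 q.2| =
  #|X :&: [set q]| + #|X :&: region q.1.+1 q.2.+1| + #|X :&: region q.1 q.2|.
Proof.
have cardIE (A : {set pos n}) : #|X :&: A| = \sum_(p in X) (p \in A).
  rewrite -sum1_card big_mkcond [RHS]big_mkcond; apply: eq_bigr => p _.
  by rewrite inE; case: (p \in X); case: (p \in A).
rewrite !cardIE -!big_split /=; apply: eq_bigr => p _.
rewrite !inE; case: p q => [a b] [x y] /=; rewrite xpair_eqE -!val_eqE /=.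
move: (nat_of_ord a) (nat_of_ord b) (nat_of_ord x) (nat_of_ord y) => a' b' x' y'.
by case: (ltngtP x' a') => h1; case: (ltngtP b' y') => h2 //=;
  rewrite ?h1 ?h2 ?eqxx /=; lia.
Qed.

Lemma region_meet (E : {set pos n}) (e : pos n) :
  (forall x, x \in E -> x.1 <= e.1) -> e.2 <= e.1 ->
  exists i j, j <= i /\ region e.1 e.2 :&: \bigcup_(x in E) region x.1 x.2 = region i j.
Proof.
move=> Emax he; case: (set_0Vmem E) => [->|[e0 he0]].
  by exists 0, 0; split => //; rewrite big_set0 setI0 region_degenerate //; left.
have [e2 he2 e2max] := @arg_maxnP _ e0 (mem E) (fun x => nat_of_ord x.2) he0.
exists e.1, (minn e.2 e2.2); split; first by rewrite geq_min he.
apply/setP => p; rewrite !inE leq_min; apply/idP/idP.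
- case/andP => /andP[h1 h2] /bigcupP [x hx]; rewrite inE => /andP[_ h4].
  by rewrite h1 h2 (leq_trans h4 (e2max x hx)).
- case/and3P => h1 h2 h3; rewrite h1 h2; apply/bigcupP; exists e2 => //.
  by rewrite inE h3 (leq_trans (Emax _ he2) h1).
Qed.

Lemma staircase T D (E : {set pos n}) : rle T D ->
  (forall e, e \in E -> e.2 <= e.1 /\ #|T :&: region e.1 e.2| = #|D :&: region e.1 e.2|) ->
  #|D :&: \bigcup_(e in E) region e.1 e.2| <= #|T :&: \bigcup_(e in E) region e.1 e.2|.
Proof.
move=> /rleP leTD; have [k] := ubnP #|E|; elim: k E => [|k IH] E // hk hE.
case: (set_0Vmem E) => [->|[e0 he0]]; first by rewrite big_set0 !setI0.
have [e he emax] := @arg_maxnP _ e0 (mem E) (fun x => nat_of_ord x.1) he0.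
have {}he : e \in E := he.
have [hee eq_e] := hE e he.
have hE' x : x \in E :\ e -> x.2 <= x.1 /\
    #|T :&: region x.1 x.2| = #|D :&: region x.1 x.2|.
  by rewrite inE => /andP[_ /hE].
have hk' : #|E :\ e| < k by move: hk; rewrite (cardsD1 e E) he.
have IHe := IH _ hk' hE'.
rewrite (big_setD1 e he) /= !setIUr !cardsU -!setIIr.
set W := \bigcup_(x in E :\ e) region x.1 x.2 in IHe *.
have below_e x : x \in E :\ e -> x.1 <= e.1 by rewrite inE => /andP[_ /emax].
have [i [j [hji meetW]]] := region_meet below_e hee.
have {}meetW : region e.1 e.2 :&: W = region i j := meetW.
have subW Y : #|Y :&: region i j| <= #|Y :&: W|.
  by rewrite -meetW; apply/subset_leq_card/setIS/subsetIr.
rewrite meetW; move: IHe eq_e (subW D) (subW T) (leTD _ _ hji).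
move: #|T :&: region e.1 e.2| #|D :&: region e.1 e.2| #|D :&: W| #|T :&: W|
  #|D :&: region i j| #|T :&: region i j| => *; lia.
Qed.

Lemma pos_le_weight_eq p q :
  pos_le q p -> p.1 + (n - p.2) <= q.1 + (n - q.2) -> q = p.
Proof.
case: p q => [p1 p2] [q1 q2]; rewrite /pos_le /= => /andP[h1 h2] hw.
have := ltn_ord p2; have := ltn_ord q2 => hp hq.
by congr (_, _); apply: val_inj => /=; lia.
Qed.

(* Below every rook p0 of D (for pos_le) there is a minimal rook of D: one of
   least weight among the rooks below p0. *)
Lemma minimal_below D p0 : p0 \in D -> exists2 p, p \in Mtilde D & pos_le p p0.
Proof.
move=> p0D; pose weight q := nat_of_ord q.1 + (n - q.2).
pose below := [set q in D | pos_le q p0].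
have hp0 : p0 \in below by rewrite inE p0D /pos_le !leqnn.
have [p hp pmin] := @arg_minnP _ p0 (mem below) weight hp0.
have {hp} /setIdP[pD pp0] : p \in below := hp.
exists p => //; rewrite inE pD; apply/forallP => q; apply/implyP => qD.
apply/implyP => qp; apply/eqP/pos_le_weight_eq => //.
suff qbelow : q \in below by exact: pmin.
move: qp pp0 => /andP[qp1 qp2] /andP[h1 h2].
by rewrite inE qD /pos_le (leq_trans qp1 h1) (leq_trans h2 qp2).
Qed.

(* If T <= D and |T| < |D|, some rook of D lies in no region on which T and
   D have the same count: otherwise the staircase inequality over all such
   regions would give |D| <= |T|. *)
Lemma exists_slack_rook T D : rle T D -> #|T| < #|D| ->
  exists2 p0, p0 \in D & forall i j, j <= i -> p0 \in region i j ->
    #|T :&: region i j| < #|D :&: region i j|.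
Proof.
move=> leTD ltTD.
pose E := [set e : pos n | (e.2 <= e.1) &&
  (#|T :&: region e.1 e.2| == #|D :&: region e.1 e.2|)].
pose W := \bigcup_(e in E) region e.1 e.2.
have DW_le_TW : #|D :&: W| <= #|T :&: W|.
  by apply: staircase leTD _ => e; rewrite inE => /andP[h1 /eqP h2].
have : ~~ (D \subset W).
  apply: contraTN ltTD => /setIidPl DW; rewrite -leqNgt.
  by rewrite -{1}DW (leq_trans DW_le_TW) ?subset_leq_card ?subsetIl.
case/subsetPn => p0 p0D p0W; exists p0 => // i j hji p0R.
have hi : i < n by move: p0R; rewrite inE => /andP[h _]; apply: leq_ltn_trans h _.
have hj : j < n := leq_ltn_trans hji hi.
rewrite ltn_neqAle (proj1 (rleP _ _) leTD _ _ hji) andbT.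
apply: contra p0W => /eqP eqR; apply/bigcupP; exists (Ordinal hi, Ordinal hj) => //.
by rewrite inE hji /= eqR.
Qed.

Lemma rle_setD1 T D p : rle T D ->
  (forall i j, j <= i -> p \in region i j -> #|T :&: region i j| < #|D :&: region i j|) ->
  rle T (D :\ p).
Proof.
move=> /rleP leTD slack; apply/rleP => i j hji.
have := card_setD1I D (region i j) p; rewrite in_setI.
case: (boolP (p \in region i j)) => pR; rewrite ?andbT ?andbF => splitD.
- have := slack _ _ hji pR; rewrite splitD.
  by case: (p \in D); rewrite ?add1n ?add0n ?ltnS // => /ltnW.
- by move: (leTD _ _ hji); rewrite splitD.
Qed.

Lemma agree_off_rook D S p : p \in D -> rle (D :\ p) S -> rle S D ->
  forall i j, j <= i -> p \notin region i j ->
    #|S :&: region i j| = #|D :&: region i j|.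
Proof.
move=> pD /rleP lowS /rleP upS i j hji pR; apply/eqP; rewrite eqn_leq upS //=.
by rewrite (card_setD1I D _ p) in_setI (negbTE pR) andbF; apply: lowS.
Qed.

Lemma cell_from_corners S D q :
  #|S :&: region q.1 q.2.+1| = #|D :&: region q.1 q.2.+1| ->
  #|S :&: region q.1.+1 q.2| = #|D :&: region q.1.+1 q.2| ->
  #|S :&: region q.1.+1 q.2.+1| = #|D :&: region q.1.+1 q.2.+1| ->
  #|S :&: region q.1 q.2| = #|D :&: region q.1 q.2| ->
  q \in D -> q \in S.
Proof.
move=> e1 e2 e3 e4 qD; have := card_region_cell S q; have := card_region_cell D q.
have -> : D :&: [set q] = [set q] by apply/setIidPr; rewrite sub1set.
rewrite e1 e2 e3 e4 cards1 => ->.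
move/eqP; rewrite !eqn_add2r => /eqP /esym cSq.
have /set0Pn[x] : S :&: [set q] != set0 by rewrite -card_gt0 cSq.
by rewrite !inE => /andP[xS /eqP <-].
Qed.

Lemma setD1_rook D p : rook D -> p \in D ->
  [/\ rook (D :\ p), rlt (D :\ p) D & #|D :\ p| < #|D|].
Proof.
move=> rD pD; split; first by apply: rook_subset rD _; apply: subsetDl.
- rewrite /rlt rle_subset ?subsetDl //=; apply: contraTneq pD => <-.
  by rewrite !inE eqxx.
- by rewrite (cardsD1 p D) pD.
Qed.

Lemma Ltilde_sub_Ntilde D T : rook D ->
  T \in Ltilde_minus D -> T \in Ntilde_minus D.
Proof.
move=> rD; rewrite inE => /and4P[_ /andP[leTD _] ltTD /forallP maxT].
have [p0 p0D slack0] := exists_slack_rook leTD ltTD.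
have [p pM pp0] := minimal_below p0D.
have pD : p \in D by move: pM; rewrite inE => /andP[].
have leTS : rle T (D :\ p).
  by apply: rle_setD1 leTD _ => i j hji /(region_up_closed pp0); apply: slack0.
have [rS ltSD ltcard] := setD1_rook rD pD.
have /eqP <- : D :\ p == T by move: (maxT (D :\ p)); rewrite rS leTS ltSD ltcard.
by apply/imsetP; exists p.
Qed.

(* If p is a minimal rook of D and D \ {p} <= S <= D, then S contains
   D \ {p}: every other rook q of D is not below p, so the regions around q
   avoid p, and S and D agree on them. *)
Lemma setD1_minimal_subset D S p : rook D -> p \in Mtilde D ->
  rle (D :\ p) S -> rle S D -> D :\ p \subset S.
Proof.
move=> rD /setIdP[pD /forallP pmin] lowS upS; apply/subsetP => q /setD1P[qp qD].
have qphi : q.2 < q.1.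
  by case/and3P: rD => /subsetP /(_ q qD); rewrite inE.
have pR : p \notin region q.1 q.2.+1.
  by rewrite inE ltnS; apply: contra qp; move/implyP: (pmin q) => /(_ qD) /implyP; apply.
have agree i j : q.1 <= i -> j <= q.2.+1 -> j <= i ->
    #|S :&: region i j| = #|D :&: region i j|.
  move=> hi hj hji; apply: agree_off_rook pD lowS upS _ _ hji _.
  by apply: contra pR; apply/subsetP/region_mono.
have q2_le_q1 : q.2 <= q.1 := ltnW qphi.
by apply: cell_from_corners qD; apply: agree; rewrite ?ltnS ?leqnn ?leqnSn ?leqW.
Qed.

Lemma Ntilde_sub_Ltilde D T : rook D ->
  T \in Ntilde_minus D -> T \in Ltilde_minus D.
Proof.
move=> rD /imsetP[p pM ->].
have pD : p \in D by move: pM; rewrite inE => /andP[].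
have [rS ltSD ltcard] := setD1_rook rD pD.
rewrite inE rS ltSD ltcard; apply/forallP => S; apply/implyP.
case/and4P => _ lowS /andP[upS _] ltS.
rewrite eq_sym eqEcard setD1_minimal_subset //=.
by move: ltS; rewrite (cardsD1 p D) pD add1n ltnS.
Qed.

End Regions.

Theorem lemma3p8 (n : nat) (hn : 1 <= n) (D : {set pos n}) :
  rook D -> Ltilde_minus D = Ntilde_minus D.
Proof.
move=> rD; apply/setP => T; apply/idP/idP.
- exact: Ltilde_sub_Ntilde.
- exact: Ntilde_sub_Ltilde.
Qed.
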